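(* Let $\alpha\in\mathbb{F}_q^*$, let $1\le k\le n$, and let $\mathscr{C}\subseteq\mathbb{F}_q^n$ be a linear code of dimension $n-k$. Then $\mathscr{C}$ is a skew $\alpha$-cyclic code if and only if $\mathscr{C}$ has a parity check matrix of the form $$[\,{}^tP,\ {}^t(P\tau),\ {}^t(P\tau^2),\ \dots,\ {}^t(P\tau^{n-1})\,]$$ for some $P\in\mathbb{F}_q^k$ and some semi-linear map $\tau=\Theta\circ T$ with $T\in GL(k,q)$, such that $P\tau^n=\alpha P$.
   Context: Let $\mathbb{F}_q$ be a finite field and $\theta$ a field automorphism of $\mathbb{F}_q$. A linear code $\mathscr{C}\subseteq\mathbb{F}_q^n$ is skew $\alpha$-cyclic if it is invariant under $(c_0,\dots,c_{n-1})\mapsto(\alpha\theta(c_{n-1}),\theta(c_0),\dots,\theta(c_{n-2}))$. Vectors are row vectors and ${}^tv$ denotes the transpose. For $P\in\mathbb{F}_q^k$ and $T\in GL(k,q)$, the semi-linear map $\tau=\Theta\circ T$ acts on the right by $P\tau:=\Theta(P)T$, where $\Theta(P)$ applies $\theta$ to each coordinate; $\tau^i$ is the $i$-fold iterate. A parity check matrix of an $[n,n-k]$-code $\mathscr{C}$ is a $k\times n$ matrix $H$ of rank $k$ with $\mathscr{C}=\{\vec c\in\mathbb{F}_q^n:\vec c\,{}^tH=0\}$. *)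

From HB Require Import structures.
From mathcomp Require Import all_boot all_order all_algebra all_field.
Set Implicit Arguments. Unset Strict Implicit. Unset Printing Implicit Defensive.
Import GRing.Theory.
Local Open Scope ring_scope.

(* Linear codes C ⊆ F^n are represented by a matrix whose row space is C;
   a codeword c : 'rV_n belongs to C iff (c <= C)%MS.  dim C = \rank C. *)

Definition skew_shift (F : fieldType) (theta : F -> F) (alpha : F) (n : nat)
  (c : 'rV[F]_n) : 'rV[F]_n :=
  \row_(i < n) ((if val i == 0%N then alpha else 1) * theta (c 0 (ord_pred i))).

Definition skew_cyclic (F : fieldType) (theta : F -> F) (alpha : F) (n : nat)
  (C : 'M[F]_n) : Prop :=
  forall c : 'rV[F]_n, (c <= C)%MS -> (skew_shift theta alpha c <= C)%MS.

(* The semi-linear map tau = Theta o T acting on the right: P tau = Theta(P) T. *)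
Definition tau_act (F : fieldType) (theta : F -> F) (k : nat) (T : 'M[F]_k)
  (P : 'rV[F]_k) : 'rV[F]_k := map_mx theta P *m T.

Definition tau_iter (F : fieldType) (theta : F -> F) (k : nat) (T : 'M[F]_k)
  (i : nat) (P : 'rV[F]_k) : 'rV[F]_k := iter i (tau_act theta T) P.

Definition skew_check_mx (F : fieldType) (theta : F -> F) (k n : nat)
  (T : 'M[F]_k) (P : 'rV[F]_k) : 'M[F]_(k, n) :=
  \matrix_(r < k, j < n) (tau_iter theta T j P) 0 r.

Definition parity_check (F : fieldType) (k n : nat) (C : 'M[F]_n)
  (H : 'M[F]_(k, n)) : Prop :=
  \rank H = k /\ forall c : 'rV[F]_n, (c <= C)%MS <-> c *m H^T = 0.

From HB Require Import structures.
From mathcomp Require Import all_boot all_order all_algebra all_field.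
From mathcomp Require Import zify.
Import GRing.Theory.
Local Open Scope ring_scope.
Set Implicit Arguments. Unset Strict Implicit.

(* Write the skew shift as S c = theta(c) Z, where Z is the matrix of the
   alpha-constacyclic shift, and let H be any parity check matrix of C.
   Over a finite field S is injective, so S(C) = C; hence theta(H^T) and
   Z H^T annihilate the same row vectors, and since theta(H^T) has full
   column rank, Z H^T = theta(H^T) T for an invertible T.  Read row by row,
   this identity says that the rows h_0, ..., h_(n-1) of H^T satisfy
   h_(j+1) = h_j tau and alpha h_0 = h_(n-1) tau, i.e. that H is the matrix
   [tP, t(P tau), ..., t(P tau^(n-1))] with P = h_0 and P tau^n = alpha P.
   Conversely, the identity gives S(c) H^T = theta(c H^T) T. *)

Definition shift_mx (R : pzRingType) (alpha : R) (n : nat) : 'M[R]_n :=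
  \matrix_(j, i) ((i == ordS j)%:R * (if (i : nat) == 0%N then alpha else 1)).
Arguments shift_mx {R} alpha {n}.

Lemma row_shift_mx_mul (R : pzRingType) (alpha : R) n k (G : 'M[R]_(n, k)) j :
  row j (shift_mx alpha *m G) =
  (if (ordS j : nat) == 0%N then alpha else 1) *: row (ordS j) G.
Proof.
apply/rowP => r; rewrite !mxE (bigD1 (ordS j)) //= big1 ?addr0 => [|i /negbTE ne].
  by rewrite /shift_mx !mxE eqxx mul1r.
by rewrite /shift_mx mxE ne !mul0r.
Qed.

Lemma skew_shiftE (F : fieldType) (theta : F -> F) alpha n (c : 'rV[F]_n) :
  skew_shift theta alpha c = map_mx theta c *m shift_mx alpha.
Proof.
apply/rowP => i; rewrite !mxE (bigD1 (ord_pred i)) //= big1 ?addr0 => [|j ne].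
  by rewrite /shift_mx !mxE ord_predK eqxx mul1r mulrC.
rewrite /shift_mx !mxE; case: eqP => [ij | _]; last by rewrite mul0r mulr0.
by case/eqP: ne; rewrite ij ordSK.
Qed.

Lemma skew_shift_inj (F : fieldType) (theta : {rmorphism F -> F}) alpha n :
  alpha != 0 -> injective (@skew_shift F theta alpha n).
Proof.
move=> alpha_nz c c' /(congr1 (fun v : 'rV_n => v 0 (ordS _))) e.
apply/rowP => i; move: (e i); rewrite !mxE ordSK.
by case: eqP => _; [move/(mulfI alpha_nz) | rewrite !mul1r]; apply: fmorph_inj.
Qed.

Lemma fin_inj_homo_mono (T : finType) (f : T -> T) (P : pred T) :
  injective f -> {homo f : x / P x} -> {mono f : x / P x}.
Proof.
move=> f_inj fP x; apply/idP/idP => [Pfx|/fP //].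
(* [finv f] is an iterate of [f]. *)
rewrite -(finv_f f_inj x) /finv.
by elim: _.-1 => //= m IH; apply: fP.
Qed.

Lemma skew_cyclic_mono (F : finFieldType) (theta : {rmorphism F -> F}) alpha n
    (C : 'M[F]_n) :
  alpha != 0 -> skew_cyclic theta alpha C ->
  {mono @skew_shift F theta alpha n : c / (c <= C)%MS}.
Proof. by move=> alpha_nz; apply: fin_inj_homo_mono; apply: skew_shift_inj. Qed.

Lemma mulmx_unit_factor (F : fieldType) n k (A B : 'M[F]_(n, k)) :
  row_full A -> (forall d : 'rV_n, (d *m A == 0) = (d *m B == 0)) ->
  exists2 T, T \in unitmx & B = A *m T.
Proof.
move=> fullA kerAB.
have kerAB_sub (A' B' : 'M[F]_(n, k)) :
    (forall d : 'rV_n, d *m A' == 0 -> d *m B' == 0) -> (kermx A' <= kermx B')%MS.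
  by move=> h; apply/rV_subP => d; rewrite !sub_kermx; apply: h.
have eqK : (kermx A == kermx B)%MS.
  by apply/andP; split; apply: kerAB_sub => d; rewrite kerAB.
have rankB : \rank B = k.
  move: (eqmx_rank eqK) (rank_leq_col B) (rank_leq_row A).
  by rewrite !mxrank_ker (eqP fullA); lia.
have [X XA] := row_fullP fullA.
have AXB : A *m (X *m B) = B.
  apply/eqP; rewrite -subr_eq0 -{2}[B]mul1mx mulmxA -mulmxBl -sub_kermx.
  apply: submx_trans (andP eqK).1; rewrite sub_kermx mulmxBl -mulmxA XA.
  by rewrite mulmx1 mul1mx subrr.
exists (X *m B) => //; rewrite -row_full_unit /row_full eqn_leq rank_leq_col.
by rewrite -{1}rankB -{1}AXB mxrankM_maxr.
Qed.

Lemma parity_check_exists (F : fieldType) n k (C : 'M[F]_n) :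
  (k <= n)%N -> \rank C = (n - k)%N -> exists H : 'M[F]_(k, n), parity_check C H.
Proof.
move=> kn rankC; set M := (cokermx C)^T.
have rankM : \rank M = k by rewrite mxrank_tr mxrank_coker rankC; lia.
have [H eqHM] : exists H : 'M_(k, n), (H == M)%MS.
  by rewrite -rankM; exists (row_base M); apply/eqmxP/eq_row_base.
exists H; split; first by rewrite (eqmx_rank eqHM).
move=> c; rewrite submxE -[cokermx C]trmxK -/M.
have kerT m (A : 'M_(m, n)) : (c *m A^T == 0) = (A <= kermx c^T)%MS.
  by rewrite sub_kermx -trmx_eq0 trmx_mul trmxK.
suff -> : (c *m M^T == 0) = (c *m H^T == 0) by split => /eqP.
by rewrite !kerT (eqmxP eqHM).
Qed.

Section SkewCheckMatrix.
Variables (F : fieldType) (theta : {rmorphism F -> F}) (alpha : F) (k : nat).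
Variable T : 'M[F]_k.

Lemma tau_iterS i P :
  tau_iter theta T i.+1 P = tau_act theta T (tau_iter theta T i P).
Proof. by []. Qed.

Lemma row_tr_skew_check_mx n P (j : 'I_n) :
  row j (skew_check_mx theta n T P)^T = tau_iter theta T j P.
Proof. by apply/rowP => r; rewrite !mxE. Qed.

Lemma shift_mx_skew_check n P : tau_iter theta T n P = alpha *: P ->
  shift_mx alpha *m (skew_check_mx theta n T P)^T =
  map_mx theta (skew_check_mx theta n T P)^T *m T.
Proof.
move=> tauP; apply/row_matrixP => j.
rewrite row_shift_mx_mul row_mul -map_row !row_tr_skew_check_mx /=.
rewrite -[_ *m T]/(tau_act theta T _) -tau_iterS.
have [ltjn | lejn] := ltnP j.+1 n; first by rewrite modn_small // scale1r.
have -> : j.+1 = n by have := ltn_ord j; lia.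
by rewrite modnn tauP.
Qed.

Lemma skew_check_mx_of_shift n (G : 'M[F]_(n.+1, k)) :
  shift_mx alpha *m G = map_mx theta G *m T ->
  G = (skew_check_mx theta n.+1 T (row 0 G))^T /\
  tau_iter theta T n.+1 (row 0 G) = alpha *: row 0 G.
Proof.
move=> shiftG.
have tau_row (j : 'I_n.+1) : tau_act theta T (row j G) =
    (if (ordS j : nat) == 0%N then alpha else 1) *: row (ordS j) G.
  by rewrite /tau_act map_row -row_mul -shiftG row_shift_mx_mul.
have iterG j : (j <= n)%N -> tau_iter theta T j (row 0 G) = row (inord j) G.
  elim: j => [|j IH] jn; first by congr row; apply/val_inj; rewrite /= inordK.
  rewrite tau_iterS IH ?(ltnW jn) // tau_row.
  have -> : ordS (inord j : 'I_n.+1) = inord j.+1.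
    by apply/val_inj; rewrite /= !inordK ?modn_small //; lia.
  by rewrite inordK // scale1r.
split.
  by apply/matrixP => i r; rewrite !mxE iterG ?inord_val ?mxE // -ltnS.
rewrite tau_iterS iterG // tau_row.
suff -> : ordS (inord n : 'I_n.+1) = 0 by [].
by apply/val_inj; rewrite /= inordK // modnn.
Qed.

End SkewCheckMatrix.

Section SkewCyclicParityCheck.
Variables (F : finFieldType) (theta : {rmorphism F -> F}) (alpha : F).
Variables (n k : nat) (C : 'M[F]_n) (H : 'M[F]_(k, n)).
Hypotheses (pcH : parity_check C H) (theta_bij : bijective theta).
Hypothesis alpha_nz : alpha != 0.

Lemma skew_cyclic_parity_checkP :
  skew_cyclic theta alpha C <->
  exists2 T, T \in unitmx & shift_mx alpha *m H^T = map_mx theta H^T *m T.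
Proof.
case: pcH => rankH memH.
have memC (c : 'rV_n) : (c <= C)%MS = (c *m H^T == 0).
  by apply/idP/eqP => /memH.
split => [cyc | [T _ shiftH] c].
  apply: mulmx_unit_factor; first by rewrite /row_full mxrank_map mxrank_tr rankH.
  move=> d; have [g thetaK gK] := theta_bij.
  have -> : d = map_mx theta (map_mx g d) by apply/rowP => i; rewrite !mxE gK.
  rewrite -map_mxM map_mx_eq0 mulmxA -skew_shiftE -!memC.
  by rewrite (skew_cyclic_mono alpha_nz cyc).
rewrite !memC skew_shiftE -mulmxA shiftH mulmxA -map_mxM => /eqP ->.
by rewrite map_mx0 mul0mx.
Qed.

End SkewCyclicParityCheck.

Theorem mainTheorem5 (F : finFieldType) (theta : {rmorphism F -> F})
  (theta_bij : bijective theta) (alpha : F) (alpha_nz : alpha != 0)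
  (k n : nat) (hk1 : (1 <= k)%N) (hkn : (k <= n)%N)
  (C : 'M[F]_n) (hdim : \rank C = (n - k)%N) :
  skew_cyclic theta alpha C <->
  exists (P : 'rV[F]_k) (T : 'M[F]_k),
    T \in unitmx /\
    parity_check C (@skew_check_mx F theta k n T P) /\
    tau_iter theta T n P = alpha *: P.
Proof.
split => [cyc | [P [T [unitT [pcPT tauP]]]]].
  case: n => [|n] in C hkn hdim cyc *; first by have := leq_trans hk1 hkn.
  have [H pcH] := parity_check_exists hkn hdim.
  have [T unitT shiftH] := (skew_cyclic_parity_checkP pcH theta_bij alpha_nz).1 cyc.
  have [/trmx_inj HE tauP] := skew_check_mx_of_shift shiftH.
  by exists (row 0 H^T), T; rewrite -HE.
apply/(skew_cyclic_parity_checkP pcPT theta_bij alpha_nz).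
by exists T; last exact: shift_mx_skew_check.
Qed.
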